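(* Let $S$ be a semilocal generalized Krull domain with maximal ideals $\mathfrak{m}_1, \dots, \mathfrak{m}_n$, where $n \geq 2$ and $\operatorname{ht} \mathfrak{m}_j \geq 2$ for all $j$. Suppose each residue field $S/\mathfrak{m}_i$ is isomorphic to a fixed field $k$, and fix isomorphisms $\alpha_i : k \to S/\mathfrak{m}_i$. Let $J = \mathfrak{m}_1 \cap \cdots \cap \mathfrak{m}_n = \prod_j \mathfrak{m}_j$, let $p: S \to S/J$ be the canonical projection, and let $h : k \to S/J$ be the composition of $\lambda \mapsto (\alpha_1(\lambda), \dots, \alpha_n(\lambda)) \in \prod_{i=1}^n S/\mathfrak{m}_i$ with the Chinese Remainder isomorphism $\prod_i S/\mathfrak{m}_i \cong S/J$. Let $R$ be the pullback of $p$ and $h$, i.e. $R = \{(s,\lambda) \in S \times k : p(s) = h(\lambda)\}$ (identified with a subring of $S$). Then $R$ is local and perinormal; moreover $R$ is globally perinormal if $S$ is. However, $R$ is not integrally closed, since its integral closure is $S$.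
   Context: All rings are commutative with identity; ''local'' means having a unique maximal ideal; an overring of a domain $R$ is a ring between $R$ and its fraction field. A ring extension $A \subseteq B$ satisfies going-down if whenever $\mathfrak{p} \subset \mathfrak{q}$ are primes of $A$ and $Q$ is a prime of $B$ with $Q \cap A = \mathfrak{q}$, there is a prime $P \subseteq Q$ of $B$ with $P \cap A = \mathfrak{p}$. A domain $R$ is perinormal if every local overring $S$ of $R$ such that $R \subseteq S$ satisfies going-down is a localization of $R$; it is globally perinormal if every overring (local or not) $S$ of $R$ such that $R \subseteq S$ satisfies going-down is a localization of $R$ at a multiplicative set. A ring satisfies (R$_1$) if its localization at every height one prime is a valuation domain. A domain $R$ is a generalized Krull domain if (1) $R = \bigcap_{\mathfrak{p}} R_{\mathfrak{p}}$ over all height one primes $\mathfrak{p}$, (2) every nonzero element lies in only finitely many height one primes, and (3) $R$ satisfies (R$_1$). *)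

(* Commutative-algebra notions for subrings of a fixed field K,
   subsets of K being represented as predicates K -> Prop. *)
From HB Require Import structures.
From mathcomp Require Import all_boot all_order all_algebra.
Set Implicit Arguments. Unset Strict Implicit. Unset Printing Implicit Defensive.
Import GRing.Theory.
Local Open Scope ring_scope.

Section CommAlg.
Variable K : fieldType.
Implicit Types (A B I P Q M : K -> Prop).

Definition subset_ A B := forall x, A x -> B x.
Definition seteq A B := forall x, A x <-> B x.
Definition ssubset A B := subset_ A B /\ exists x, B x /\ ~ A x.

(* A is a subring (with 1) of K; such a ring is automatically a domain. *)
Definition subring A :=
  [/\ A 1, (forall x y, A x -> A y -> A (x - y)) & (forall x y, A x -> A y -> A (x * y))].

Definition frac A : K -> Prop :=
  fun x => exists a b, [/\ A a, A b, b != 0 & x = a / b].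

Definition ideal A I :=
  [/\ subset_ I A, I 0, (forall x y, I x -> I y -> I (x + y))
    & (forall a x, A a -> I x -> I (a * x))].

Definition prime_ideal A P :=
  [/\ ideal A P, ~ P 1 & (forall x y, A x -> A y -> P (x * y) -> P x \/ P y)].

Definition maximal_ideal A P :=
  [/\ ideal A P, ~ P 1 & (forall I, ideal A I -> subset_ P I -> I 1 \/ seteq I P)].

Definition local_ring A :=
  exists P, maximal_ideal A P /\ forall Q, maximal_ideal A Q -> seteq Q P.

Definition mult_set A M :=
  [/\ subset_ M A, M 1, ~ M 0 & (forall x y, M x -> M y -> M (x * y))].

Definition localization A M : K -> Prop :=
  fun x => exists a s, [/\ A a, M s & x = a / s].

Definition loc_at_prime A P : K -> Prop :=
  localization A (fun x => A x /\ ~ P x).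

Definition is_localization A T :=
  exists M, mult_set A M /\ seteq T (localization A M).

Definition overring A T := [/\ subring T, subset_ A T & subset_ T (frac A)].

Definition going_down A B :=
  forall p q, prime_ideal A p -> prime_ideal A q -> subset_ p q ->
  forall Q, prime_ideal B Q -> seteq (fun x => Q x /\ A x) q ->
  exists P, [/\ prime_ideal B P, subset_ P Q & seteq (fun x => P x /\ A x) p].

Definition perinormal A :=
  forall T, overring A T -> local_ring T -> going_down A T -> is_localization A T.

Definition globally_perinormal A :=
  forall T, overring A T -> going_down A T -> is_localization A T.

Definition zero_set : K -> Prop := fun x => x = 0.

Definition height_one A P :=
  [/\ prime_ideal A P, exists x, P x /\ x <> 0 &
      forall Q, prime_ideal A Q -> subset_ Q P -> subset_ Q zero_set \/ seteq Q P].

Definition height_ge2 A P :=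
  exists Q0 Q1, [/\ prime_ideal A Q0, prime_ideal A Q1, ssubset Q0 Q1 & ssubset Q1 P].

Definition valuation_domain A :=
  forall x, frac A x -> x != 0 -> A x \/ A x^-1.

Definition generalized_Krull A :=
  [/\ seteq A (fun x => frac A x /\ forall P, height_one A P -> loc_at_prime A P x),
      (forall x, A x -> x != 0 -> exists (N : nat) (f : nat -> K -> Prop),
          forall P, height_one A P -> P x -> exists i, (i < N)%N /\ seteq P (f i))
    & (forall P, height_one A P -> valuation_domain (loc_at_prime A P))].

Definition integral_over A (x : K) :=
  exists p : {poly K}, [/\ p \is monic, (forall i, A p`_i) & root p x].

Definition integral_closure A : K -> Prop :=
  fun x => frac A x /\ integral_over A x.

Definition integrally_closed A :=
  forall x, frac A x -> integral_over A x -> A x.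

End CommAlg.

(* The pullback ring R = {(s, l) : p(s) = h(l)}, identified with its (injective)
   image in S: given lifts a i : k -> K of the isomorphisms alpha_i : k -> S/m_i,
   s in S lies in R iff for some l, s ≡ a i l (mod m_i) for every i
   (this is p(s) = h(l) after the Chinese Remainder isomorphism). *)
Definition pullback_ring (K k : fieldType) (n : nat) (S : K -> Prop)
  (m : 'I_n -> K -> Prop) (a : 'I_n -> k -> K) : K -> Prop :=
  fun s => S s /\ exists l : k, forall i, m i (s - a i l).

(* a : k -> K induces a ring isomorphism k -> S/m (a is a lift into S). *)
Definition residue_iso (K k : fieldType) (S m : K -> Prop) (a : k -> K) :=
  (forall l, S (a l)) /\
  [/\ (forall l u, m (a (l + u) - (a l + a u))),
      (forall l u, m (a (l * u) - a l * a u)),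
      m (a 1 - 1),
      (forall l, m (a l) -> l = 0)
    & (forall s, S s -> exists l, m (s - a l))].

(* R is local with maximal ideal J: an element of R outside J is congruent
   modulo every m_i to the image of one nonzero scalar, so it lies in no m_i and
   its inverse lies in R again.  Each s in S agrees modulo m_i with some c_i in
   R, so s is a root of the monic polynomial prod_i (X - c_i) - p(s) over R, the
   constant p(s) lying in J; as a generalized Krull domain is integrally closed,
   S is the integral closure of R, and an idempotent of S/J separating m_1 from
   m_2 lies in S but not in R.

   Let T be an overring of R with going-down and N a prime of T outside which
   every element of T is a unit.  Since every m_i has height at least 2, J lies
   in no height-one prime Q of S, and going-down along Q ∩ R ⊆ N ∩ R puts T
   inside S_Q.  If J ⊆ N this holds for every Q, so T ⊆ S, and then T ⊆ R
   because an element of T lying in some m_i lies in N.  Otherwise some t in J is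
   a unit of T; the finite character of S then puts T inside the localization of
   S at N ∩ S, which makes T the localization of R at R \ N.  For a non-local T
   the same dichotomy applies: either a nonzero t in J is a unit of T, so that
   S ⊆ T and global perinormality of S makes T a localization of S, hence of R;
   or JT is proper and the localization of T at a maximal ideal over JT lies in
   R. *)

From Pilot Require Import Defs.
From mathcomp Require Import all_boot all_order all_algebra.
From mathcomp Require Import ring zify.
From mathcomp Require classical_sets.
From Stdlib Require Import Classical.
Set Implicit Arguments. Unset Strict Implicit. Unset Printing Implicit Defensive.
Import GRing.Theory.
Local Open Scope ring_scope.

(** * Subrings, ideals and localizations of a field *)

Section RingTheory.
Variable K : fieldType.
Implicit Types (A B T V I P Q M X : K -> Prop) (x y z s t c : K).

Section Subring.
Variable A : K -> Prop.
Hypothesis hA : subring A.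

Lemma subring1 : A 1. Proof. by case: hA. Qed.

Lemma subringB x y : A x -> A y -> A (x - y). Proof. by case: hA => _ + _; apply. Qed.

Lemma subringM x y : A x -> A y -> A (x * y). Proof. by case: hA => _ _; apply. Qed.

Lemma subring0 : A 0. Proof. by rewrite -(subrr 1); apply: subringB; apply: subring1. Qed.

Lemma subringN x : A x -> A (- x).
Proof. by move=> hx; rewrite -sub0r; apply: subringB => //; apply: subring0. Qed.

Lemma subringD x y : A x -> A y -> A (x + y).
Proof. by move=> hx hy; rewrite -[y]opprK; apply: subringB => //; apply: subringN. Qed.

Lemma subringX x e : A x -> A (x ^+ e).
Proof.
move=> hx; elim: e => [|e IH]; first by rewrite expr0; apply: subring1.
by rewrite exprS; apply: subringM.
Qed.

Lemma subringMn x e : A x -> A (x *+ e).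
Proof.
move=> hx; elim: e => [|e IH]; first by rewrite mulr0n; apply: subring0.
by rewrite mulrS; apply: subringD.
Qed.

Lemma subring_prod (I : Type) (r : seq I) (P : pred I) (F : I -> K) :
  (forall i, P i -> A (F i)) -> A (\prod_(i <- r | P i) F i).
Proof.
move=> hF; elim/big_rec: _ => [|i w Pi IH]; first exact: subring1.
by apply: subringM => //; apply: hF.
Qed.

Lemma subring_sum (I : Type) (r : seq I) (P : pred I) (F : I -> K) :
  (forall i, P i -> A (F i)) -> A (\sum_(i <- r | P i) F i).
Proof.
move=> hF; elim/big_rec: _ => [|i w Pi IH]; first exact: subring0.
by apply: subringD => //; apply: hF.
Qed.

End Subring.

Lemma subring_prod_pow_mul V (N : nat) (u : 'I_N -> K) (E e : nat) i x :
  subring V -> (forall j, V (u j)) -> (e <= E)%N -> V (u i ^+ e * x) ->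
  V ((\prod_j u j ^+ E) * x).
Proof.
move=> hV hu heE hx; have hE : E = (E - e + e)%N by rewrite subnK.
rewrite (bigD1 i) //= [X in u i ^+ X]hE exprD -!mulrA.
apply: (subringM hV); first exact: (subringX hV).
rewrite mulrCA; apply: (subringM hV _ hx).
by apply: (subring_prod hV) => j _; apply: (subringX hV).
Qed.

Lemma frac_subset A B x : subset_ A B -> Defs.frac A x -> Defs.frac B x.
Proof. by move=> hAB [a [b [ha hb hb0 ->]]]; exists a, b; split=> //; apply: hAB. Qed.

Lemma frac_frac A B x : subring A -> subset_ B (Defs.frac A) -> Defs.frac B x -> Defs.frac A x.
Proof.
move=> hA hB [a [b [ha hb hb0 ->]]].
have [a1 [a2 [h1 h2 h20 ->]]] := hB _ ha.
have [b1 [b2 [h3 h4 h40 eb]]] := hB _ hb.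
have hb1 : b1 != 0 by apply: contraNneq hb0; rewrite eb => ->; rewrite mul0r.
exists (a1 * b2), (a2 * b1); split; [exact: (subringM hA)|exact: (subringM hA)|exact: mulf_neq0|].
by rewrite eb; field; rewrite h20 h40 hb1.
Qed.

Section Ideal.
Variables (A I : K -> Prop).
Hypotheses (hA : subring A) (hI : ideal A I).

Lemma ideal_sub x : I x -> A x. Proof. by case: hI => + _ _ _; apply. Qed.

Lemma ideal0 : I 0. Proof. by case: hI. Qed.

Lemma idealD x y : I x -> I y -> I (x + y). Proof. by case: hI => _ _ + _; apply. Qed.

Lemma idealMl c x : A c -> I x -> I (c * x). Proof. by case: hI => _ _ _; apply. Qed.

Lemma idealMr x c : I x -> A c -> I (x * c).
Proof. by move=> hx hc; rewrite mulrC; apply: idealMl. Qed.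

Lemma idealN x : I x -> I (- x).
Proof. by move=> hx; rewrite -mulN1r; exact: (idealMl (subringN hA (subring1 hA)) hx). Qed.

Lemma idealB x y : I x -> I y -> I (x - y).
Proof. by move=> hx hy; apply: idealD => //; apply: idealN. Qed.

Lemma ideal_sum (J : Type) (r : seq J) (P : pred J) (F : J -> K) :
  (forall j, P j -> I (F j)) -> I (\sum_(j <- r | P j) F j).
Proof.
move=> hF; elim/big_rec: _ => [|j w Pj IH]; first exact: ideal0.
by apply: idealD => //; apply: hF.
Qed.

Lemma ideal_proper_unit x : ~ I 1 -> x != 0 -> A x^-1 -> ~ I x.
Proof. by move=> hI1 x0 hx' hx; apply: hI1; rewrite -(mulVf x0); apply: idealMl. Qed.

End Ideal.

Lemma ideal_seteq A I I' : seteq I I' -> ideal A I -> ideal A I'.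
Proof.
move=> e [h1 h2 h3 h4]; split.
- by move=> x /e; apply: h1.
- exact/e.
- by move=> x y /e hx /e hy; apply/e; apply: h3.
- by move=> c x hc /e hx; apply/e; apply: h4.
Qed.

Section Prime.
Variables (A P : K -> Prop).
Hypotheses (hA : subring A) (hP : prime_ideal A P).

Lemma prime_ideal_ideal : ideal A P. Proof. by case: hP. Qed.

Lemma prime_ideal_proper : ~ P 1. Proof. by case: hP. Qed.

Lemma prime_idealM x y : A x -> A y -> P (x * y) -> P x \/ P y.
Proof. by case: hP => _ _; apply. Qed.

Lemma prime_ideal_neq0 x : ~ P x -> x != 0.
Proof. by move=> hx; apply/eqP => x0; apply: hx; rewrite x0; apply: (ideal0 prime_ideal_ideal). Qed.

Lemma prime_ideal_pow x e : A x -> P (x ^+ e) -> P x.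
Proof.
move=> hx; elim: e => [|e IH]; first by rewrite expr0 => /prime_ideal_proper.
by rewrite exprS => /(prime_idealM hx (subringX hA _ hx)) [].
Qed.

Lemma prime_ideal_prod_notin (I : Type) (r : seq I) (Q : pred I) (F : I -> K) :
  (forall i, Q i -> A (F i) /\ ~ P (F i)) ->
  A (\prod_(i <- r | Q i) F i) /\ ~ P (\prod_(i <- r | Q i) F i).
Proof.
move=> hF; apply: (big_rec (fun w => A w /\ ~ P w)) => [|i w Qi [hw hPw]].
  by split; [apply: (subring1 hA)|apply: prime_ideal_proper].
have [hAi hPi] := hF i Qi; split; first exact: (subringM hA).
by case/(prime_idealM hAi hw).
Qed.

End Prime.

Lemma prime_ideal_zero A : subring A -> prime_ideal A (@zero_set K).
Proof.
move=> hA; split.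
- split=> [x ->|//|x y -> ->|c x _ ->]; rewrite ?addr0 ?mulr0 //; exact: (subring0 hA).
- by move/eqP; rewrite oner_eq0.
- by move=> x y _ _ /eqP; rewrite mulf_eq0 => /orP [] /eqP; [left|right].
Qed.

Lemma prime_ideal_contract A B P : subring A -> subring B -> subset_ A B ->
  prime_ideal B P -> prime_ideal A (fun x => P x /\ A x).
Proof.
move=> hA hB hAB hP; have hI := prime_ideal_ideal hP; split.
- split=> [x []//|||c x hc [hx hx']].
  + by split; [apply: (ideal0 hI)|apply: (subring0 hA)].
  + by move=> x y [hx hx'] [hy hy']; split; [apply: (idealD hI)|apply: (subringD hA)].
  + by split; [apply: (idealMl hI)=> //; apply: hAB|apply: (subringM hA)].
- by case=> /(prime_ideal_proper hP).
- move=> x y hx hy [hxy _].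
  by case: (prime_idealM hP (hAB _ hx) (hAB _ hy) hxy) => h; [left|right].
Qed.

Definition ideal_add I I' : K -> Prop := fun z => exists x y, [/\ I x, I' y & z = x + y].

Lemma ideal_ideal_add A I I' : subring A -> ideal A I -> ideal A I' -> ideal A (ideal_add I I').
Proof.
move=> hA hI hI'; split.
- by move=> _ [x [y [hx hy ->]]]; apply: (subringD hA (ideal_sub hI hx) (ideal_sub hI' hy)).
- by exists 0, 0; rewrite addr0; split=> //; [apply: (ideal0 hI)|apply: (ideal0 hI')].
- move=> _ _ [x [y [hx hy ->]]] [x' [y' [hx' hy' ->]]].
  by exists (x + x'), (y + y'); split; [apply: (idealD hI)|apply: (idealD hI')|ring].
- move=> c _ hc [x [y [hx hy ->]]].
  by exists (c * x), (c * y); split; [apply: (idealMl hI)|apply: (idealMl hI')|ring].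
Qed.

Definition principal_ideal A x : K -> Prop := fun z => exists c, A c /\ z = c * x.

Lemma principal_ideal_mem A x : subring A -> principal_ideal A x x.
Proof. by move=> hA; exists 1; rewrite mul1r; split=> //; apply: (subring1 hA). Qed.

Lemma ideal_principal_ideal A x : subring A -> A x -> ideal A (principal_ideal A x).
Proof.
move=> hA hx; split.
- by move=> _ [c [hc ->]]; apply: (subringM hA).
- by exists 0; rewrite mul0r; split=> //; apply: (subring0 hA).
- by move=> _ _ [c [hc ->]] [d [hd ->]]; exists (c + d); split; [apply: (subringD hA)|ring].
- by move=> d _ hd [c [hc ->]]; exists (d * c); split; [apply: (subringM hA)|ring].
Qed.

Lemma maximal_prime_ideal A M : subring A -> maximal_ideal A M -> prime_ideal A M.
Proof.
move=> hA [hI hM1 hmax]; split=> // x y hx hy hxy.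
case: (classic (M x)) => hMx; [by left|right].
have hMI : subset_ M (ideal_add M (principal_ideal A x)).
  move=> z hz; exists z, 0; rewrite addr0; split=> //.
  exact: (ideal0 (ideal_principal_ideal hA hx)).
case: (hmax _ (ideal_ideal_add hA hI (ideal_principal_ideal hA hx)) hMI)
  => [[u [_ [hu [c [hc ->]] e]]]|heq].
  have -> : y = y * u + c * (x * y) by rewrite -[LHS]mulr1 e; ring.
  exact: (idealD hI (idealMl hI hy hu) (idealMl hI hc hxy)).
case: hMx; apply/heq; exists 0, x; rewrite add0r; split=> //; first exact: (ideal0 hI).
exact: (principal_ideal_mem x hA).
Qed.

Lemma ideal_union_chain A I (F : (K -> Prop) -> Prop) : ideal A I ->
  (forall X, F X -> ideal A (fun x => X x \/ I x)) ->
  (forall X Y, F X -> F Y -> subset_ X Y \/ subset_ Y X) ->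
  ideal A (fun x => (exists2 X, F X & X x) \/ I x).
Proof.
move=> hI hF htot.
have hmem X x : F X -> X x \/ I x -> (exists2 X, F X & X x) \/ I x.
  by move=> FX [Xx|Ix]; [left; exists X|right].
split.
- move=> x [[X FX Xx]|hx]; last exact: (ideal_sub hI hx).
  by apply: (ideal_sub (hF X FX)); left.
- by right; apply: (ideal0 hI).
- move=> x y [[X FX Xx]|hx] [[Y FY Yy]|hy]; last by right; apply: (idealD hI).
  + have [XY|YX] := htot X Y FX FY.
      exact: (hmem Y _ FY (idealD (hF Y FY) (or_introl (XY _ Xx)) (or_introl Yy))).
    exact: (hmem X _ FX (idealD (hF X FX) (or_introl Xx) (or_introl (YX _ Yy)))).
  + exact: (hmem X _ FX (idealD (hF X FX) (or_introl Xx) (or_intror hy))).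
  + exact: (hmem Y _ FY (idealD (hF Y FY) (or_intror hx) (or_introl Yy))).
- move=> c x hc [[X FX Xx]|hx]; last by right; apply: (idealMl hI).
  exact: (hmem X _ FX (idealMl (hF X FX) hc (or_introl Xx))).
Qed.

Lemma exists_maximal_ideal A I : subring A -> ideal A I -> ~ I 1 ->
  exists M, maximal_ideal A M /\ subset_ I M.
Proof.
move=> hA hI hI1.
(* Zorn is applied to the X whose union with I is a proper ideal, so that the
   empty chain also has an upper bound. *)
pose proper X := ideal A (fun x => X x \/ I x) /\ ~ (X 1 \/ I 1).
have [X [[hXI hX1] hXmax]] : exists X, proper X /\
    forall Y, classical_sets.proper X Y -> ~ proper Y.
  apply: classical_sets.Zorn_bigcup => F hF htot; split.
    by apply: ideal_union_chain => // X /hF [].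
  by case=> [[Y /hF [_ hY1] Y1]|//]; apply: hY1; left.
exists (fun x => X x \/ I x); split=> [|x]; last by right.
split=> // Y hY hXY; case: (classic (Y 1)) => [|hY1]; [by left|right].
have hIY : subset_ I Y by move=> x hx; apply: hXY; right.
case: (classic (classical_sets.subset Y X)) => hYX.
  by move=> x; split=> [/hYX|]; [left|apply: hXY].
exfalso; apply: (hXmax Y); first by split=> // x hx; apply: hXY; left.
split; last by case.
apply: (ideal_seteq _ hY) => x.
by split=> [hx|[hx|/hIY hx]] //; left.
Qed.

Lemma nonunit_maximal_ideal A x : subring A -> A x -> ~ A x^-1 ->
  exists M, maximal_ideal A M /\ M x.
Proof.
move=> hA hx hx'.
have hI1 : ~ principal_ideal A x 1.
  move=> [c [hc e]]; apply: hx'.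
  have x0 : x != 0 by apply/eqP => x0; move/eqP: e; rewrite x0 mulr0 oner_eq0.
  by rewrite -[x^-1]mul1r e mulfK.
have [M [hM hxM]] := exists_maximal_ideal hA (ideal_principal_ideal hA hx) hI1.
by exists M; split=> //; apply/hxM/(principal_ideal_mem x hA).
Qed.

Lemma local_ring_unit A N : subring A -> maximal_ideal A N ->
  (forall Q, maximal_ideal A Q -> seteq Q N) -> forall z, A z -> ~ N z -> A z^-1.
Proof.
move=> hA hN hNuniq z hz hNz; apply: NNPP => hz'.
have [M [hM hMz]] := nonunit_maximal_ideal hA hz hz'.
by apply: hNz; apply/(hNuniq _ hM).
Qed.

Lemma height_one_prime A P : height_one A P -> prime_ideal A P. Proof. by case. Qed.

Lemma height_one_not_sup_height_ge2 A P M : height_one A P -> maximal_ideal A M ->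
  height_ge2 A M -> ~ subset_ M P.
Proof.
move=> [hP _ hPmin] [hMI hM1 hMmax] [Q0 [Q1 [hQ0 hQ1 [_ [y [hy hy0]]] [hQ1M [z [hz hz1]]]]]] hMP.
have [hP1|hPM] := hMmax P (prime_ideal_ideal hP) hMP; first exact: (prime_ideal_proper hP hP1).
case: (hPmin Q1 hQ1 (fun w hw => hMP _ (hQ1M _ hw))) => [hQ10|hQ1P].
  by apply: hy0; rewrite (hQ10 _ hy); apply: (ideal0 (prime_ideal_ideal hQ0)).
by apply: hz1; apply/hQ1P/hPM.
Qed.

Lemma height_ge2_not_sub_zero A M : height_ge2 A M -> ~ subset_ M (@zero_set K).
Proof.
move=> [Q0 [Q1 [_ hQ1 _ [_ [z [hz hz1]]]]]] hM0.
by apply: hz1; rewrite (hM0 _ hz); apply: (ideal0 (prime_ideal_ideal hQ1)).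
Qed.

Definition ideal_span T X : K -> Prop := fun y =>
  exists l : seq (K * K),
    (forall p, p \in l -> X p.1 /\ T p.2) /\ y = \sum_(p <- l) p.1 * p.2.

Lemma ideal_span_mem T X x : subring T -> X x -> ideal_span T X x.
Proof.
move=> hT hx; exists [:: (x, 1)]; rewrite big_seq1 mulr1; split=> // p.
by rewrite inE => /eqP -> /=; split=> //; apply: (subring1 hT).
Qed.

Lemma ideal_ideal_span T X : subring T -> subset_ X T -> ideal T (ideal_span T X).
Proof.
move=> hT hXT; split.
- move=> _ [l [hl ->]]; rewrite big_seq; apply: (subring_sum hT) => p /hl [h1 h2].
  by apply: (subringM hT) => //; apply: hXT.
- by exists [::]; rewrite big_nil.
- move=> _ _ [l1 [hl1 ->]] [l2 [hl2 ->]]; exists (l1 ++ l2); rewrite big_cat.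
  by split=> // p; rewrite mem_cat => /orP [/hl1|/hl2].
- move=> c _ hc [l [hl ->]]; exists [seq (p.1, c * p.2) | p <- l]; split.
    by move=> _ /mapP [p /hl [h1 h2] ->]; split=> //; apply: (subringM hT).
  by rewrite big_map mulr_sumr; apply: eq_bigr => p _ /=; rewrite mulrCA.
Qed.

Section Localization.
Variables (A M : K -> Prop).
Hypotheses (hA : subring A) (hM : mult_set A M).

Lemma mult_set_sub s : M s -> A s. Proof. by case: hM => + _ _ _; apply. Qed.

Lemma mult_set1 : M 1. Proof. by case: hM. Qed.

Lemma mult_set_neq0 s : M s -> s != 0.
Proof. by case: hM => _ _ hM0 _ hs; apply/eqP => s0; apply: hM0; rewrite -s0. Qed.

Lemma mult_setM s t : M s -> M t -> M (s * t). Proof. by case: hM => _ _ _; apply. Qed.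

Lemma localization_sub x : A x -> localization A M x.
Proof. by move=> hx; exists x, 1; rewrite divr1; split=> //; apply: mult_set1. Qed.

Lemma localization_inv s : M s -> localization A M s^-1.
Proof. by move=> hs; exists 1, s; rewrite div1r; split=> //; apply: (subring1 hA). Qed.

Lemma subring_localization : subring (localization A M).
Proof.
split; first exact/localization_sub/(subring1 hA).
- move=> _ _ [a [s [ha hs ->]]] [b [t [hb ht ->]]].
  have s0 := mult_set_neq0 hs; have t0 := mult_set_neq0 ht.
  exists (a * t - b * s), (s * t); split; last by field; rewrite s0 t0.
    by apply: (subringB hA); apply: (subringM hA) => //; apply: mult_set_sub.
  exact: mult_setM.
- move=> _ _ [a [s [ha hs ->]]] [b [t [hb ht ->]]].
  have s0 := mult_set_neq0 hs; have t0 := mult_set_neq0 ht.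
  exists (a * b), (s * t); split; last by field; rewrite s0 t0.
    exact: (subringM hA).
  exact: mult_setM.
Qed.

Lemma localization_frac x : localization A M x -> Defs.frac A x.
Proof.
move=> [a [s [ha hs ->]]]; exists a, s.
by split=> //; [apply: mult_set_sub|apply: mult_set_neq0].
Qed.

Lemma localization_common_denominator (r : seq K) :
  (forall x, x \in r -> localization A M x) ->
  exists2 s, M s & forall x, x \in r -> A (s * x).
Proof.
elim: r => [|x r IH] hr; first by exists 1 => //; apply: mult_set1.
have [s hs hsr] := IH (fun y hy => hr y (mem_behead (s := x :: r) hy)).
have [a [t [ha ht ex]]] := hr x (mem_head x r).
exists (s * t); first exact: mult_setM.
move=> y; rewrite inE => /predU1P [->|hy].
  have -> : s * t * x = s * a by rewrite ex; field; rewrite (mult_set_neq0 ht).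
  by apply: (subringM hA) => //; apply: mult_set_sub.
by rewrite mulrAC; apply: (subringM hA) (hsr y hy) (mult_set_sub ht).
Qed.

End Localization.

Lemma mult_set_prime_compl A P : subring A -> prime_ideal A P ->
  mult_set A (fun x => A x /\ ~ P x).
Proof.
move=> hA hP; split=> [x []//|||x y [hx hPx] [hy hPy]].
- by split; [apply: (subring1 hA)|apply: (prime_ideal_proper hP)].
- by case=> _; apply; apply: (ideal0 (prime_ideal_ideal hP)).
- by split; [apply: (subringM hA)|case/(prime_idealM hP hx hy)].
Qed.

Lemma subring_loc_at_prime A P : subring A -> prime_ideal A P -> subring (loc_at_prime A P).
Proof. by move=> hA hP; apply: (subring_localization hA); apply: mult_set_prime_compl. Qed.

Lemma loc_at_prime_sub A P x : subring A -> prime_ideal A P -> A x -> loc_at_prime A P x.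
Proof. by move=> hA hP; apply: localization_sub; apply: mult_set_prime_compl. Qed.

Lemma loc_at_prime_seteq A P P' x : seteq P P' -> loc_at_prime A P x -> loc_at_prime A P' x.
Proof. by move=> e [a [s [ha [hs hPs] ->]]]; exists a, s; split=> //; split=> // /e. Qed.

Definition loc_ideal M P : K -> Prop := fun x => exists a s, [/\ P a, M s & x = a / s].

Section LocalizedPrime.
Variables (A M P : K -> Prop).
Hypotheses (hA : subring A) (hM : mult_set A M) (hP : prime_ideal A P).
Hypothesis hMP : forall s, M s -> ~ P s.

Lemma loc_ideal_sub x : P x -> loc_ideal M P x.
Proof. by move=> hx; exists x, 1; rewrite divr1; split=> //; apply: (mult_set1 hM). Qed.

Lemma loc_ideal_contract x : A x -> loc_ideal M P x -> P x.
Proof.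
move=> hx [a [s [ha hs e]]].
have : P (x * s) by rewrite e divfK ?(mult_set_neq0 hM hs).
by case/(prime_idealM hP hx (mult_set_sub hM hs)) => // /hMP.
Qed.

Lemma prime_loc_ideal : prime_ideal (localization A M) (loc_ideal M P).
Proof.
have hI := prime_ideal_ideal hP; split.
- split.
  + by move=> _ [a [s [ha hs ->]]]; exists a, s; split=> //; apply: (ideal_sub hI).
  + exact/loc_ideal_sub/(ideal0 hI).
  + move=> _ _ [a [s [ha hs ->]]] [b [t [hb ht ->]]].
    have s0 := mult_set_neq0 hM hs; have t0 := mult_set_neq0 hM ht.
    exists (a * t + b * s), (s * t); split; last by field; rewrite s0 t0.
      by apply: (idealD hI); apply: (idealMr hI) => //; apply: (mult_set_sub hM).
    exact: (mult_setM hM).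
  + move=> _ _ [c [u [hc hu ->]]] [a [s [ha hs ->]]].
    have s0 := mult_set_neq0 hM hs; have u0 := mult_set_neq0 hM hu.
    exists (c * a), (u * s); split; last by field; rewrite s0 u0.
      exact: (idealMl hI).
    exact: (mult_setM hM).
- move=> [a [s [ha hs e]]]; apply: (hMP hs).
  by rewrite -[s]mul1r e divfK ?(mult_set_neq0 hM hs).
- move=> _ _ [c [u [hc hu ->]]] [d [v [hd hv ->]]] [a [s [ha hs e]]].
  have s0 := mult_set_neq0 hM hs; have u0 := mult_set_neq0 hM hu.
  have v0 := mult_set_neq0 hM hv.
  have ecd : c * d * s = a * (u * v).
    by apply/eqP; rewrite -eqr_div ?mulf_neq0 // -e; apply/eqP; field; rewrite u0 v0.
  have : P (c * d * s).
    by rewrite ecd; apply: (idealMr hI) => //; apply: (subringM hA); apply: (mult_set_sub hM).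
  case/(prime_idealM hP (subringM hA hc hd) (mult_set_sub hM hs)); last by move/hMP.
  by case/(prime_idealM hP hc hd) => h; [left; exists c, u|right; exists d, v].
Qed.

End LocalizedPrime.

Lemma loc_at_prime_inv T N z : loc_at_prime T N z ->
  ~ loc_ideal (fun y => T y /\ ~ N y) N z -> loc_at_prime T N z^-1.
Proof.
move=> [b [s [hb [hs hNs] ->]]] hz; exists s, b; rewrite invf_div; split=> //.
by split=> // hNb; apply: hz; exists b, s.
Qed.

Lemma going_down_loc_at_prime R T N : subring R -> subring T -> subset_ R T ->
  going_down R T -> prime_ideal T N -> going_down R (loc_at_prime T N).
Proof.
move=> hR hT hRT hgd hN p q hp hq hpq Q hQ hQq.
have hM := mult_set_prime_compl hT hN.
have hTN := subring_localization hT hM.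
have hQT := prime_ideal_contract hT hTN (localization_sub hM) hQ.
have hQTq : seteq (fun x => (Q x /\ T x) /\ R x) q.
  move=> x; split=> [[[hx _] hRx]|/hQq [hx hRx]]; first exact/hQq.
  by split=> //; split=> //; apply: hRT.
have [P [hP hPQ hPp]] := hgd p q hp hq hpq _ hQT hQTq.
have hQN z : T z -> Q z -> N z.
  move=> hz hQz; apply: NNPP => hNz.
  apply: (ideal_proper_unit (prime_ideal_ideal hQ) (prime_ideal_proper hQ)
    (prime_ideal_neq0 hN hNz) _ hQz).
  exact: (localization_inv hT (conj hz hNz)).
have hMP s : T s /\ ~ N s -> ~ P s.
  by move=> [hs hNs] /hPQ [hQs _]; apply: hNs; apply: hQN.
exists (loc_ideal (fun y => T y /\ ~ N y) P); split.
- exact: prime_loc_ideal.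
- move=> _ [a [s [ha hs ->]]]; have [hQa _] := hPQ _ ha.
  by rewrite mulrC; apply: (idealMl (prime_ideal_ideal hQ) _ hQa); apply: (localization_inv hT hs).
- move=> x; split=> [[hx hRx]|/hPp [hPx hRx]].
    by apply/hPp; split=> //; apply: (loc_ideal_contract hM hP hMP (hRT _ hRx) hx).
  by split=> //; apply: (loc_ideal_sub hM).
Qed.

Lemma is_localization_of_units A T : subring A -> subring T -> subset_ A T ->
  (forall x, T x -> exists r y, [/\ A r, A y, y != 0, T y^-1 & x = r / y]) ->
  is_localization A T.
Proof.
move=> hA hT hAT hTfrac; exists (fun y => [/\ A y, y != 0 & T y^-1]); split.
  split=> [y []//||[_ /eqP]//|x y [hx x0 hx'] [hy y0 hy']].
    by split; [apply: (subring1 hA)|apply: oner_neq0|rewrite invr1; apply: (subring1 hT)].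
  by split; [apply: (subringM hA)|apply: mulf_neq0|rewrite invfM; apply: (subringM hT)].
move=> x; split=> [/hTfrac [r [y [hr hy y0 hy' ->]]]|[r [y [hr [_ _ hy'] ->]]]].
  by exists r, y.
by apply: (subringM hT) => //; apply: hAT.
Qed.

Lemma is_localization_refl A T : subring A -> subring T -> subset_ A T -> subset_ T A ->
  is_localization A T.
Proof.
move=> hA hT hAT hTA; apply: is_localization_of_units => // x hx.
exists x, 1; rewrite divr1 invr1 oner_neq0.
by split=> //; [apply: hTA|apply: (subring1 hA)|apply: (subring1 hT)].
Qed.

Definition contracted_radical A V c : K -> Prop :=
  fun z => A z /\ exists e : nat, V (z ^+ e / c).

Section ContractedRadical.
Variables (A V : K -> Prop) (c : K).
Hypotheses (hA : subring A) (hV : subring V) (hAV : subset_ A V).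

Lemma ideal_contracted_radical : ideal A (contracted_radical A V c).
Proof.
have hAV_X z e : A z -> V (z ^+ e) by move=> hz; apply/hAV/(subringX hA).
split.
- by move=> z [].
- split; first exact: (subring0 hA).
  by exists 1%N; rewrite expr1 mul0r; apply: (subring0 hV).
- move=> z1 z2 [hz1 [e1 he1]] [hz2 [e2 he2]]; split; first exact: (subringD hA).
  exists (e1 + e2)%N; rewrite exprDn mulr_suml; apply: (subring_sum hV) => i _.
  rewrite mulrnAl; apply: (subringMn hV).
  have [hi|hi] := leqP e2 i.
    rewrite -(subnK hi) exprD -!mulrA; apply: (subringM hV); first exact: (hAV_X _ _ hz1).
    by apply: (subringM hV) he2; apply: (hAV_X _ _ hz2).
  have hi' : (e1 <= e1 + e2 - i)%N by lia.
  rewrite -(subnK hi') exprD mulrAC -!mulrA; apply: (subringM hV); first exact: (hAV_X _ _ hz1).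
  by apply: (subringM hV) he1; apply: (hAV_X _ _ hz2).
- move=> d z hd [hz [e he]]; split; first exact: (subringM hA).
  by exists e; rewrite exprMn -mulrA; apply: (subringM hV) => //; apply: hAV_X.
Qed.

Lemma prime_contracted_radical : valuation_domain V -> ~ V c^-1 ->
  prime_ideal A (contracted_radical A V c).
Proof.
move=> hval hc'; split; first exact: ideal_contracted_radical.
  by move=> [_ [e]]; rewrite expr1n mul1r.
move=> z1 z2 hz1 hz2 [_ [e he]].
have [->|z10] := eqVneq z1 0; first by left; apply: (ideal0 ideal_contracted_radical).
have [->|z20] := eqVneq z2 0; first by right; apply: (ideal0 ideal_contracted_radical).
have w1 : z1 ^+ e != 0 by apply: expf_neq0.
have w2 : z2 ^+ e != 0 by apply: expf_neq0.
have hw : Defs.frac V (z1 ^+ e / z2 ^+ e).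
  by exists (z1 ^+ e), (z2 ^+ e); split=> //; apply/hAV/(subringX hA).
rewrite exprMn in he.
case: (hval _ hw (mulf_neq0 w1 (invr_neq0 w2))) => hv; [left|right]; split=> //;
  exists (e + e)%N.
  have -> : z1 ^+ (e + e) / c = (z1 ^+ e / z2 ^+ e) * (z1 ^+ e * z2 ^+ e / c).
    by rewrite exprD [RHS]mulrA; congr (_ * _); field; rewrite w2.
  exact: (subringM hV).
have -> : z2 ^+ (e + e) / c = (z1 ^+ e / z2 ^+ e)^-1 * (z1 ^+ e * z2 ^+ e / c).
  by rewrite exprD [RHS]mulrA; congr (_ * _); field; rewrite w1 w2.
exact: (subringM hV).
Qed.

End ContractedRadical.

(* c != 0 is needed: for c = 0 every z ^+ e / c is 0. *)
Lemma contracted_radical_sub A P c : subring A -> prime_ideal A P -> P c -> c != 0 ->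
  subset_ (contracted_radical A (loc_at_prime A P) c) P.
Proof.
move=> hA hP hc c0 z [hz [e [a [s [ha [hs hPs] ecs]]]]].
have s0 := prime_ideal_neq0 hP hPs.
have : P (z ^+ e * s).
  have -> : z ^+ e * s = a * c by apply/eqP; rewrite -eqr_div // ecs.
  exact: (idealMl (prime_ideal_ideal hP) ha hc).
by case/(prime_idealM hP (subringX hA _ hz) hs) => [/(prime_ideal_pow hA hP hz)|/hPs].
Qed.

Lemma subring_coef_prod_XsubC A (I : Type) (r : seq I) (P : pred I) (F : I -> K) j :
  subring A -> (forall i, A (F i)) -> A (\prod_(i <- r | P i) ('X - (F i)%:P))`_j.
Proof.
move=> hA hF; elim/big_rec: _ j => [j|i w _ IH j].
  by rewrite coefC; case: (j == 0); [apply: (subring1 hA)|apply: (subring0 hA)].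
rewrite mulrBl coefB coefXM coefCM; apply: (subringB hA); last exact: (subringM hA).
by case: (j == 0); [apply: (subring0 hA)|apply: IH].
Qed.

Lemma monic_subC (p : {poly K}) c : p \is monic -> (1 < size p)%N -> p - c%:P \is monic.
Proof.
move=> mon hsz; rewrite monicE lead_coefDl -?monicE // size_polyN.
exact: leq_ltn_trans (size_polyC_leq1 _) hsz.
Qed.

Lemma integral_inv_mem V x : subring V -> V x^-1 -> integral_over V x -> V x.
Proof.
move=> hV hx' [p [mon hp rootp]].
have [->|x0] := eqVneq x 0; first exact: (subring0 hV).
have hsz : (1 < size p)%N.
  rewrite ltnNge; apply/negP => /size1_polyC ep.
  by move: rootp (monic_neq0 mon); rewrite ep rootC polyC_eq0 => /eqP ->; rewrite eqxx.
have xpow i j : (i <= j)%N -> x ^+ i * x^-1 ^+ j = x^-1 ^+ (j - i).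
  by move=> hi; rewrite -{1}(subnK hi) exprD mulrCA -exprMn mulfV // expr1n mulr1.
have [d hsize] : exists d, size p = d.+2 by exists (size p).-2; case: (size p) hsz => [|[|]].
move: rootp; rewrite rootE horner_coef hsize.
have lead1 : p`_d.+1 = 1 by move/monicP: mon; rewrite /lead_coef hsize.
rewrite big_ord_recr /= lead1 mul1r => /eqP /(congr1 (fun w => w * x^-1 ^+ d)).
rewrite mul0r mulrDl mulr_suml exprS -mulrA -exprMn mulfV // expr1n mulr1.
move=> E; have -> : x = - \sum_(i < d.+1) p`_i * x^-1 ^+ (d - i).
  apply/eqP; rewrite -addr_eq0 addrC -[X in _ == X]E; apply/eqP; congr (_ + _).
  by apply: eq_bigr => i _; rewrite -mulrA xpow // -ltnS.
apply: (subringN hV).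
by apply: (subring_sum hV) => i _; apply: (subringM hV) => //; apply: (subringX hV).
Qed.

End RingTheory.

(** * Generalized Krull domains *)

Section GeneralizedKrull.
Variables (K : fieldType) (S : K -> Prop).
Hypotheses (hS : subring S) (hK : generalized_Krull S).
Implicit Types (P Q : K -> Prop) (x y : K).

Lemma krull_mem x :
  S x <-> Defs.frac S x /\ forall P, height_one S P -> loc_at_prime S P x.
Proof. by case: hK. Qed.

Lemma krull_valuation P : height_one S P -> valuation_domain (loc_at_prime S P).
Proof. by case: hK => _ _; apply. Qed.

Lemma krull_finite_height_one b : S b -> b != 0 ->
  exists (N : nat) (f : nat -> K -> Prop),
    forall P, height_one S P -> P b -> exists i, (i < N)%N /\ seteq P (f i).
Proof. by case: hK => _ + _; apply. Qed.

Lemma krull_integrally_closed : integrally_closed S.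
Proof.
move=> x hx [p [mon hp rootp]]; apply/krull_mem; split=> // P hP.
have hPp := height_one_prime hP.
have [->|x0] := eqVneq x 0; first exact/(loc_at_prime_sub hS hPp)/(subring0 hS).
have hxP : Defs.frac (loc_at_prime S P) x.
  by apply: frac_subset hx => y; apply: (loc_at_prime_sub hS).
have [//|hx'] := krull_valuation hP hxP x0.
apply: (integral_inv_mem (subring_loc_at_prime hS hPp) hx').
by exists p; split=> // i; apply: (loc_at_prime_sub hS).
Qed.

Lemma loc_height_one_pow_mul Q u x : height_one S Q -> Q u -> Defs.frac S x ->
  exists e : nat, loc_at_prime S Q (u ^+ e * x).
Proof.
move=> hQ hu hx; have hQp := height_one_prime hQ.
set V := loc_at_prime S Q; have hV : subring V := subring_loc_at_prime hS hQp.
have hSV : subset_ S V by move=> y; apply: (loc_at_prime_sub hS).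
have [->|x0] := eqVneq x 0; first by exists 0%N; rewrite mulr0; apply/hSV/(subring0 hS).
have [hVx|[d [c [hd [hc hQc] ex]]]] := krull_valuation hQ (frac_subset hSV hx) x0.
  by exists 0%N; rewrite expr0 mul1r.
have d0 : d != 0 by apply: contra_neq x0 => d0; rewrite -[x]invrK ex d0 mul0r invr0.
have {}ex : x = c / d by rewrite -[x]invrK ex invf_div.
have [hQd|hQd] := classic (Q d); last by exists 0%N; rewrite expr0 mul1r ex; exists c, d.
(* The contracted radical of d in S_Q is a nonzero prime inside the height-one
   prime Q, hence equals Q and contains u. *)
have hrad_sub := contracted_radical_sub hS hQp hQd d0.
have hV' : ~ V d^-1.
  move=> hd'; apply: (prime_ideal_proper hQp); apply: hrad_sub.
  by split; [apply: (subring1 hS)|exists 1%N; rewrite expr1 mul1r].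
have hrad := prime_contracted_radical hS hV hSV (krull_valuation hQ) hV'.
have [_ _ hQmin] := hQ.
case: (hQmin _ hrad hrad_sub) => [hrad0|hradQ].
  move/eqP: (d0); case; apply: hrad0; split=> //.
  by exists 1%N; rewrite expr1 mulfV //; apply: (subring1 hV).
have [_ [e he]] := (hradQ u).2 hu.
exists e; rewrite ex mulrA mulrAC; exact: (subringM hV he (hSV _ hc)).
Qed.

Lemma loc_height_one_class_pow_mul P C x : prime_ideal S P -> Defs.frac S x ->
  exists u (e : nat), [/\ S u, ~ P u & forall Q, height_one S Q -> seteq Q C ->
    ~ subset_ Q P -> loc_at_prime S Q (u ^+ e * x)].
Proof.
move=> hP hx.
case: (classic (exists Q, [/\ height_one S Q, seteq Q C & ~ subset_ Q P]))
  => [[Q [hQ hQC hQP]]|hno]; last first.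
  exists 1, 0%N; split=> [|/(prime_ideal_proper hP)//|Q hQ hQC hQP].
    exact: (subring1 hS).
  by case: hno; exists Q.
have [u [hu hPu]] : exists u, Q u /\ ~ P u.
  by apply: NNPP => h; apply: hQP => y hy; apply: NNPP => hPy; apply: h; exists y.
have [e he] := loc_height_one_pow_mul hQ hu hx.
exists u, e; split=> [|//|Q' _ hQ'C _].
  exact: (ideal_sub (prime_ideal_ideal (height_one_prime hQ)) hu).
by apply: loc_at_prime_seteq he => y; split=> [/hQC/hQ'C|/hQ'C/hQC].
Qed.

Lemma loc_at_prime_of_height_one P x : prime_ideal S P -> Defs.frac S x ->
  (forall Q, height_one S Q -> subset_ Q P -> loc_at_prime S Q x) -> loc_at_prime S P x.
Proof.
move=> hP hx hloc; have [a [b [ha hb b0 ex]]] := hx.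
have [N [f hf]] := krull_finite_height_one hb b0.
have [u /fin_all_exists [e hue]] :=
  fin_all_exists (fun i : 'I_N => loc_height_one_class_pow_mul (f i) hP hx).
(* W avoids P and clears the denominator of x at each of the finitely many
   height-one primes over b not inside P. *)
pose E := (\sum_i e i)%N; pose W := \prod_i u i ^+ E.
have [hW hPW] : S W /\ ~ P W.
  apply: (prime_ideal_prod_notin hS hP) => i _; have [hu hPu _] := hue i.
  by split; [apply: (subringX hS)|move/(prime_ideal_pow hS hP hu)].
have hWx : S (W * x).
  apply/krull_mem; split.
    by rewrite ex; exists (W * a), b; split=> //; [apply: (subringM hS)|rewrite mulrA].
  move=> Q hQ; have hQp := height_one_prime hQ.
  have hV := subring_loc_at_prime hS hQp.
  have [hQb|hQb] := classic (Q b); last first.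
    apply: (subringM hV); first exact: (loc_at_prime_sub hS).
    by rewrite ex; exists a, b.
  have [hQP|hQP] := classic (subset_ Q P).
    by apply: (subringM hV); [apply: (loc_at_prime_sub hS)|apply: hloc].
  have [i [hi hQf]] := hf Q hQ hQb; have [_ _ he] := hue (Ordinal hi).
  apply: (subring_prod_pow_mul (i := Ordinal hi) hV _ _ (he Q hQ hQf hQP)).
    by move=> j; apply: (loc_at_prime_sub hS) => //; case: (hue j).
  by rewrite /E (bigD1 (Ordinal hi)) //= leq_addr.
exists (W * x), W; split=> [//|//|].
by rewrite [W * x]mulrC mulfK // (prime_ideal_neq0 hP hPW).
Qed.

End GeneralizedKrull.

(** * The pullback ring *)

Section Pullback.
Variables (K : fieldType) (S : K -> Prop) (n : nat) (m : 'I_n -> K -> Prop)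
  (k : fieldType) (a : 'I_n -> k -> K).
Hypotheses (hS : subring S) (hK : generalized_Krull S) (hn : (2 <= n)%N)
  (hm : forall i, maximal_ideal S (m i)) (hdist : forall i j, seteq (m i) (m j) -> i = j)
  (hall : forall P, maximal_ideal S P -> exists i, seteq P (m i))
  (hht : forall j, height_ge2 S (m j)) (hres : forall i, residue_iso S (m i) (a i)).
Implicit Types (P Q T N : K -> Prop) (x y z s t c : K) (l : k).

Local Notation R := (pullback_ring S m a).

Definition J x := forall i, m i x.

Definition i0 : 'I_n := Ordinal (ltnW hn).

Lemma ideal_m i : ideal S (m i). Proof. by case: (hm i). Qed.

Lemma m_proper i : ~ m i 1. Proof. by case: (hm i). Qed.

Lemma alphaS i l : S (a i l). Proof. by case: (hres i). Qed.

Lemma alphaD i l u : m i (a i (l + u) - (a i l + a i u)).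
Proof. by case: (hres i) => _ []. Qed.

Lemma alphaM i l u : m i (a i (l * u) - a i l * a i u).
Proof. by case: (hres i) => _ []. Qed.

Lemma alpha1 i : m i (a i 1 - 1). Proof. by case: (hres i) => _ []. Qed.

Lemma alpha_eq0 i l : m i (a i l) -> l = 0. Proof. by case: (hres i) => _ [_ _ _ + _]; apply. Qed.

Lemma alpha_surj i s : S s -> exists l, m i (s - a i l).
Proof. by case: (hres i) => _ [_ _ _ _]; apply. Qed.

Lemma alpha0 i : m i (a i 0).
Proof. by have := idealN hS (ideal_m i) (alphaD i 0 0); rewrite addr0 opprB addrK. Qed.

Lemma alphaB i l u : m i (a i l - a i u - a i (l - u)).
Proof. by have := alphaD i (l - u) u; rewrite subrK opprD addrA addrAC. Qed.

Lemma J_S x : J x -> S x. Proof. by move=> hx; apply: (ideal_sub (ideal_m i0) (hx i0)). Qed.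

Lemma R_S x : R x -> S x. Proof. by case. Qed.

Lemma J_R x : J x -> R x.
Proof.
move=> hx; split; first exact: J_S.
by exists 0 => i; apply: (idealB hS (ideal_m i) (hx i) (alpha0 i)).
Qed.

Lemma ideal_J : ideal S J.
Proof.
split=> [x|i|x y hx hy i|c x hc hx i]; first exact: J_S.
- exact: (ideal0 (ideal_m i)).
- exact: (idealD (ideal_m i) (hx i) (hy i)).
- exact: (idealMl (ideal_m i) hc (hx i)).
Qed.

Lemma subring_R : subring R.
Proof.
split.
- split; first exact: (subring1 hS).
  by exists 1 => i; rewrite -opprB; apply: (idealN hS (ideal_m i) (alpha1 i)).
- move=> x y [hx [l hl]] [hy [u hu]]; split; first exact: (subringB hS).
  exists (l - u) => i.
  have -> : x - y - a i (l - u) =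
      (x - a i l) - (y - a i u) + (a i l - a i u - a i (l - u)) by ring.
  exact: (idealD (ideal_m i) (idealB hS (ideal_m i) (hl i) (hu i)) (alphaB i l u)).
- move=> x y [hx [l hl]] [hy [u hu]]; split; first exact: (subringM hS).
  exists (l * u) => i.
  have -> : x * y - a i (l * u) =
      (x - a i l) * y + a i l * (y - a i u) - (a i (l * u) - a i l * a i u) by ring.
  apply: (idealB hS (ideal_m i) _ (alphaM i l u)); apply: (idealD (ideal_m i)).
    exact: (idealMr (ideal_m i) (hl i) hy).
  exact: (idealMl (ideal_m i) (alphaS i l) (hu i)).
Qed.

Lemma comaximal i j : i != j -> exists x, m i x /\ m j (1 - x).
Proof.
move=> hij; have [_ _ hjmax] := hm j.
have hjI : subset_ (m j) (ideal_add (m i) (m j)).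
  by move=> y hy; exists 0, y; rewrite add0r; split=> //; apply: (ideal0 (ideal_m i)).
case: (hjmax _ (ideal_ideal_add hS (ideal_m i) (ideal_m j)) hjI) => [[x [y [hx hy e]]]|hIj].
  by exists x; split=> //; rewrite e addrC addKr.
case/negP: hij; apply/eqP/hdist.
have hij : subset_ (m i) (m j).
  by move=> x hx; apply/hIj; exists x, 0; rewrite addr0; split=> //; apply: (ideal0 (ideal_m j)).
have [_ _ himax] := hm i.
by case: (himax _ (ideal_m j) hij) => [/m_proper|h] // x; split=> /h.
Qed.

Lemma idempotent i : exists e, [/\ S e, m i (1 - e) & forall j, j != i -> m j e].
Proof.
have : forall j, exists x, j != i -> m j x /\ m i (1 - x).
  move=> j; case: (boolP (j != i)) => hj; last by exists 0.
  by have [x hx] := comaximal hj; exists x.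
case/fin_all_exists => x hx.
have hxS j : j != i -> S (x j) by move/hx => [/(ideal_sub (ideal_m j))].
have [hE hE1] : S (\prod_(j | j != i) x j) /\ m i (1 - \prod_(j | j != i) x j).
  apply: (big_rec (fun w => S w /\ m i (1 - w))) => [|j w hj [hw hw1]].
    by rewrite subrr; split; [apply: (subring1 hS)|apply: (ideal0 (ideal_m i))].
  split; first exact: (subringM hS (hxS j hj) hw).
  have -> : 1 - x j * w = (1 - x j) + x j * (1 - w) by ring.
  exact: (idealD (ideal_m i) (hx j hj).2 (idealMl (ideal_m i) (hxS j hj) hw1)).
exists (\prod_(j | j != i) x j); split=> // j hj.
rewrite (bigD1 j) //=; apply: (idealMr (ideal_m j) (hx j hj).1).
by apply: (subring_prod hS) => j' /andP [/hxS].
Qed.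

Lemma exists_R_lift l : exists c, R c /\ forall i, m i (c - a i l).
Proof.
have [e he] := fin_all_exists idempotent.
pose c := \sum_j e j * a j l.
have hc i : m i (c - a i l).
  rewrite /c (bigD1 i) //=; set rest := \sum_(j < n | j != i) _.
  have -> : e i * a i l + rest - a i l = rest - (1 - e i) * a i l by ring.
  apply: (idealB hS (ideal_m i)).
    apply: (ideal_sum (ideal_m i)) => j hj; have [_ _ hej] := he j.
    by apply: (idealMr (ideal_m i) (hej i _) (alphaS j l)); rewrite eq_sym.
  by have [hei hei1 _] := he i; apply: (idealMr (ideal_m i)) => //; apply: alphaS.
have hSc : S c.
  by apply: (subring_sum hS) => j _; have [hej _ _] := he j; apply: (subringM hS hej (alphaS j l)).
by exists c; split=> //; split=> //; exists l.
Qed.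

Lemma exists_R_congr i s : S s -> exists c, R c /\ m i (s - c).
Proof.
move=> hs; have [l hl] := alpha_surj i hs; have [c [hc hcl]] := exists_R_lift l.
exists c; split=> //; have -> : s - c = (s - a i l) - (c - a i l) by ring.
exact: (idealB hS (ideal_m i) hl (hcl i)).
Qed.

Lemma S_inv s : S s -> (forall i, ~ m i s) -> S s^-1.
Proof.
move=> hs hms; apply: NNPP => hs'.
have [M [hM hMs]] := nonunit_maximal_ideal hS hs hs'.
by have [i hi] := hall hM; apply: (hms i); apply/hi.
Qed.

Lemma J_neq0 x : ~ J x -> x != 0.
Proof. by apply: contra_notN => /eqP -> i; apply: (ideal0 (ideal_m i)). Qed.

Lemma R_inv r : R r -> ~ J r -> R r^-1.
Proof.
move=> [hr [l hl]] hJ; have r0 := J_neq0 hJ.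
have [i hi] : exists i, ~ m i r by apply: not_all_ex_not.
have l0 : l != 0.
  apply/eqP => l0; apply: hi; rewrite -(subrK (a i l) r).
  by apply: (idealD (ideal_m i) (hl i)); rewrite l0; apply: alpha0.
have hmr j : ~ m j r.
  move=> hj; move/eqP: l0; apply; apply: (@alpha_eq0 j).
  have -> : a j l = r - (r - a j l) by ring.
  exact: (idealB hS (ideal_m j) hj (hl j)).
split; first exact: S_inv.
exists l^-1 => j.
(* r^-1 - a_j(l^-1) = r^-1 (1 - r a_j(l^-1)), and modulo m_j
   r a_j(l^-1) = a_j(l) a_j(l^-1) = a_j(1) = 1. *)
have -> : r^-1 - a j l^-1 = r^-1 * (- ((r - a j l) * a j l^-1)
    - (a j l * a j l^-1 - a j (l * l^-1)) - (a j (l * l^-1) - 1)) by field.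
have hl1 : m j (a j (l * l^-1) - 1) by rewrite mulfV //; apply: alpha1.
apply: (idealMl (ideal_m j) (S_inv hr hmr)); apply: (idealB hS (ideal_m j) _ hl1).
apply: (idealB hS (ideal_m j)).
  exact: (idealN hS (ideal_m j) (idealMr (ideal_m j) (hl j) (alphaS j _))).
by rewrite -opprB; apply: (idealN hS (ideal_m j) (alphaM j _ _)).
Qed.

Lemma ideal_proper_sub_J I : ideal R I -> ~ I 1 -> subset_ I J.
Proof.
move=> hI hI1 x hx; apply: NNPP => hJx.
exact: (ideal_proper_unit hI hI1 (J_neq0 hJx) (R_inv (ideal_sub hI hx) hJx) hx).
Qed.

Lemma maximal_J : maximal_ideal R J.
Proof.
split.
- split=> [x /J_R //|i|x y hx hy i|c x hc hx i].
  + exact: (ideal0 (ideal_m i)).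
  + exact: (idealD (ideal_m i) (hx i) (hy i)).
  + exact: (idealMl (ideal_m i) (R_S hc) (hx i)).
- by move=> h; apply: (m_proper (h i0)).
- move=> I hI hJI; case: (classic (I 1)) => [|hI1]; [by left|right].
  by move=> x; split=> [/(ideal_proper_sub_J hI hI1)|/hJI].
Qed.

Lemma local_R : local_ring R.
Proof.
exists J; split=> [|Q [hQ hQ1 hQmax]]; first exact: maximal_J.
have [hJ hJ1 _] := maximal_J.
by case: (hQmax J hJ (ideal_proper_sub_J hQ hQ1)) => [//|hJQ] x; split=> /hJQ.
Qed.

Lemma exists_J_notin P : prime_ideal S P -> (forall i, ~ subset_ (m i) P) ->
  exists t, J t /\ ~ P t.
Proof.
move=> hP hmP.
have : forall i, exists x, m i x /\ ~ P x.
  move=> i; apply: NNPP => h; apply: (hmP i) => x hx.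
  by apply: NNPP => hPx; apply: h; exists x.
case/fin_all_exists => x hx.
have hxS i : S (x i) := ideal_sub (ideal_m i) (hx i).1.
exists (\prod_i x i); split.
  move=> i; rewrite (bigD1 i) //=; apply: (idealMr (ideal_m i) (hx i).1).
  exact: (subring_prod hS).
suff [] : S (\prod_i x i) /\ ~ P (\prod_i x i) by [].
by apply: (prime_ideal_prod_notin hS hP) => i _; split; [apply: hxS|case: (hx i)].
Qed.

Lemma exists_J_neq0 : exists t, J t /\ t != 0.
Proof.
have [t [ht ht0]] := exists_J_notin (prime_ideal_zero hS)
  (fun i => height_ge2_not_sub_zero (hht i)).
by exists t; split=> //; apply/eqP.
Qed.

Lemma height_one_exists_J_notin Q : height_one S Q -> exists t, J t /\ ~ Q t.
Proof.
move=> hQ; apply: (exists_J_notin (height_one_prime hQ)) => i.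
exact: (height_one_not_sup_height_ge2 hQ (hm i) (hht i)).
Qed.

Lemma S_frac_R s : S s -> Defs.frac R s.
Proof.
move=> hs; have [t [ht t0]] := exists_J_neq0.
exists (s * t), t; rewrite mulfK //; split=> //; last exact: J_R.
by apply: J_R => i; apply: (idealMl (ideal_m i) hs (ht i)).
Qed.

Lemma integral_R s : S s -> integral_over R s.
Proof.
move=> hs; have [c hc] := fin_all_exists (fun i => exists_R_congr i hs).
pose p := \prod_i ('X - (c i)%:P).
have hpR j : R p`_j.
  exact: (subring_coef_prod_XsubC _ _ j subring_R (fun i => (hc i).1)).
have hps : J p.[s].
  move=> i; rewrite /p horner_prod (bigD1 i) //= hornerXsubC.
  apply: (idealMr (ideal_m i) (hc i).2); apply: (subring_prod hS) => j _.
  by rewrite hornerXsubC; apply: (subringB hS hs); apply: R_S; case: (hc j).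
exists (p - (p.[s])%:P); split.
- apply: monic_subC; first exact: monic_prod_XsubC.
  by rewrite /p size_prod_XsubC -[index_enum _]enumT -cardT card_ord ltnS ltnW.
- move=> j; rewrite coefB coefC; apply: (subringB subring_R) => //.
  by case: (j == 0); [apply: J_R|apply: (subring0 subring_R)].
- by rewrite rootE hornerD hornerN hornerC subrr.
Qed.

Lemma S_notin_R : exists2 e, S e & ~ R e.
Proof.
have [e [he he1 he0]] := idempotent i0.
pose i1 : 'I_n := Ordinal hn.
have i10 : i1 != i0 by apply/eqP => /(congr1 val).
exists e => // [[_ [l hl]]].
have l0 : l = 0.
  apply: (@alpha_eq0 i1); have -> : a i1 l = e - (e - a i1 l) by ring.
  exact: (idealB hS (ideal_m i1) (he0 _ i10) (hl i1)).
apply: (@m_proper i0); have -> : 1 = (1 - e) + (e - a i0 l) + a i0 l by ring.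
by apply: (idealD (ideal_m i0) (idealD (ideal_m i0) he1 (hl i0))); rewrite l0; apply: alpha0.
Qed.

Lemma integral_closure_R : seteq (integral_closure R) S.
Proof.
move=> x; split=> [[hx [p [mon hp rootp]]]|hx]; last by split; [apply: S_frac_R|apply: integral_R].
apply: (krull_integrally_closed hS hK); first exact: frac_subset R_S hx.
by exists p; split=> // i; apply: R_S.
Qed.

Lemma not_integrally_closed_R : ~ integrally_closed R.
Proof.
move=> hR; have [e he heR] := S_notin_R; apply: heR.
exact: hR (S_frac_R he) (integral_R he).
Qed.

(** * Perinormality of the pullback *)

Lemma loc_height_one_of_lying_over T Q P t : subring T -> subset_ R T ->
  subset_ T (Defs.frac S) -> height_one S Q -> ideal T P ->
  (forall r, R r -> P r <-> Q r) -> J t -> ~ Q t -> subset_ T (loc_at_prime S Q).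
Proof.
move=> hT hRT hTf hQ hP hPQ ht hQt x hx.
have hQp := height_one_prime hQ; have hQI := prime_ideal_ideal hQp.
have hV := subring_loc_at_prime hS hQp.
have [->|x0] := eqVneq x 0; first exact: (subring0 hV).
have hxQ : Defs.frac (loc_at_prime S Q) x.
  by apply: frac_subset (hTf _ hx) => y; apply: (loc_at_prime_sub hS).
case: (krull_valuation hK hQ hxQ x0) => // [[b [s [hb [hs hQs] ex]]]].
have s0 := prime_ideal_neq0 hQp hQs.
have hxb : x * b = s by rewrite -[b](divfK s0) -ex mulrA mulfV // mul1r.
have b0 : b != 0 by apply: contra_neq s0 => b0; rewrite -hxb b0 mulr0.
(* If b lies in Q then so does s t = x (b t), as P ∩ R = Q ∩ R; but neither s nor t does. *)
have [hQb|hQb] := classic (Q b); last by exists s, b; split=> //; rewrite -hxb mulfK.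
have hbt : J (b * t) by move=> i; apply: (idealMl (ideal_m i) hb (ht i)).
have hst : J (s * t) by move=> i; apply: (idealMl (ideal_m i) hs (ht i)).
have hPbt : P (b * t) by apply/(hPQ _ (J_R hbt)); apply: (idealMr hQI hQb (J_S ht)).
have /(hPQ _ (J_R hst)) : P (s * t) by rewrite -hxb -mulrA; apply: (idealMl hP hx hPbt).
by case/(prime_idealM hQp hs (J_S ht)).
Qed.

Lemma overring_sub_loc_height_one T N Q : overring R T -> going_down R T ->
  prime_ideal T N -> height_one S Q -> subset_ (fun x => Q x /\ R x) N ->
  subset_ T (loc_at_prime S Q).
Proof.
move=> [hT hRT hTf] hgd hN hQ hQN.
have hq := prime_ideal_contract subring_R hT hRT hN.
have hp := prime_ideal_contract subring_R hS R_S (height_one_prime hQ).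
have hpq : subset_ (fun x => Q x /\ R x) (fun x => N x /\ R x).
  by move=> y [hQy hRy]; split=> //; apply: hQN.
have [P [hP _ hPp]] := hgd _ _ hp hq hpq N hN (fun y => conj id id).
have [t [ht hQt]] := height_one_exists_J_notin hQ.
apply: (loc_height_one_of_lying_over hT hRT _ hQ (prime_ideal_ideal hP) _ ht hQt).
  by move=> x /hTf; apply: frac_subset R_S.
by move=> r hr; split=> h; [case: ((hPp r).1 (conj h hr))|case: ((hPp r).2 (conj h hr))].
Qed.

Lemma overring_sub_S T N : overring R T -> going_down R T -> prime_ideal T N ->
  subset_ J N -> subset_ T S.
Proof.
move=> hTo hgd hN hJN x hx; have [_ _ hTf] := hTo.
apply/(krull_mem hK); split; first exact: frac_subset R_S (hTf _ hx).
move=> Q hQ; apply: (overring_sub_loc_height_one hTo hgd hN hQ _ hx).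
have [hI hI1 _] := prime_ideal_contract subring_R hS R_S (height_one_prime hQ).
by move=> y hy; apply/hJN/(ideal_proper_sub_J hI hI1).
Qed.

Lemma overring_sub_R T N : overring R T -> going_down R T -> prime_ideal T N ->
  (forall z, T z -> ~ N z -> T z^-1) -> subset_ J N -> subset_ T R.
Proof.
move=> hTo hgd hN hNu hJN; have [hT hRT _] := hTo.
have hTS := overring_sub_S hTo hgd hN hJN.
have hNJ : subset_ (fun y => N y /\ R y) J.
  by have [hI hI1 _] := prime_ideal_contract subring_R hT hRT hN; apply: ideal_proper_sub_J.
have hmN z i : T z -> m i z -> N z.
  move=> hz hmz; apply: NNPP => hNz; apply: (@m_proper i).
  rewrite -(mulfV (prime_ideal_neq0 hN hNz)).
  exact: (idealMr (ideal_m i) hmz (hTS _ (hNu _ hz hNz))).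
have hmJ z i : T z -> m i z -> J z.
  move=> hz hmz j; have [c [hc hzc]] := exists_R_congr j (hTS _ hz).
  have hzcT : T (z - c) := subringB hT hz (hRT _ hc).
  have hNc : N c.
    have -> : c = z - (z - c) by ring.
    exact: (idealB hT (prime_ideal_ideal hN) (hmN _ _ hz hmz) (hmN _ _ hzcT hzc)).
  rewrite -(subrK c z); exact: (idealD (ideal_m j) hzc (hNJ _ (conj hNc hc) j)).
move=> x hx; have [c [hc hxc]] := exists_R_congr i0 (hTS _ hx).
rewrite -(subrK c x); apply: (subringD subring_R _ hc); apply: J_R.
exact: (hmJ _ _ (subringB hT hx (hRT _ hc)) hxc).
Qed.

Lemma S_sub_overring T t : subring T -> subset_ R T -> J t -> t != 0 -> T t^-1 ->
  subset_ S T.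
Proof.
move=> hT hRT ht t0 ht' s hs; rewrite -(mulfK t0 s); apply: (subringM hT _ ht').
by apply/hRT/J_R => i; apply: (idealMl (ideal_m i) hs (ht i)).
Qed.

Lemma overring_unit_fractions T N t : overring R T -> going_down R T -> prime_ideal T N ->
  (forall z, T z -> ~ N z -> T z^-1) -> J t -> ~ N t ->
  forall x, T x -> exists r y, [/\ R r, R y, y != 0, T y^-1 & x = r / y].
Proof.
move=> hTo hgd hN hNu ht hNt x hx; have [hT hRT hTf] := hTo.
have hTt : T t := hRT _ (J_R ht).
have t0 := prime_ideal_neq0 hN hNt.
have hST := S_sub_overring hT hRT ht t0 (hNu _ hTt hNt).
have hNS := prime_ideal_contract hS hT hST hN.
have : loc_at_prime S (fun y => N y /\ S y) x.
  apply: (loc_at_prime_of_height_one hS hK hNS); first exact: frac_subset R_S (hTf _ hx).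
  move=> Q hQ hQN; apply: (overring_sub_loc_height_one hTo hgd hN hQ _ hx).
  by move=> y [/hQN []].
move=> [b [s [hb [hs hNs] ->]]].
have s0 : s != 0 := prime_ideal_neq0 hNS hNs.
have hNst : ~ N (s * t).
  by case/(prime_idealM hN (hST _ hs) hTt) => // hNs'; apply: hNs.
exists (b * t), (s * t); split.
- by apply: J_R => i; apply: (idealMl (ideal_m i) hb (ht i)).
- by apply: J_R => i; apply: (idealMl (ideal_m i) hs (ht i)).
- exact: mulf_neq0.
- exact: (hNu _ (subringM hT (hST _ hs) hTt) hNst).
- by field; rewrite s0 t0.
Qed.

Lemma perinormal_R : perinormal R.
Proof.
move=> T hTo [N [hNmax hNuniq]] hgd; have [hT hRT _] := hTo.
have hN := maximal_prime_ideal hT hNmax.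
have hNu := local_ring_unit hT hNmax hNuniq.
case: (classic (exists t, J t /\ ~ N t)) => [[t [ht hNt]]|hJN].
  apply: (is_localization_of_units subring_R hT hRT).
  exact: (overring_unit_fractions hTo hgd hN hNu ht hNt).
apply: (is_localization_refl subring_R hT hRT (overring_sub_R hTo hgd hN hNu _)).
by move=> x hx; apply: NNPP => hNx; apply: hJN; exists x.
Qed.

Lemma going_down_S_of_R T : subring T -> subset_ S T -> going_down R T ->
  (forall Q, prime_ideal T Q -> exists t, J t /\ ~ Q t) -> going_down S T.
Proof.
move=> hT hST hgd hJ p q hp hq hpq Q hQ hQq.
have hpR := prime_ideal_contract subring_R hS R_S hp.
have hqR := prime_ideal_contract subring_R hS R_S hq.
have hpqR : subset_ (fun x => p x /\ R x) (fun x => q x /\ R x).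
  by move=> x [hx hRx]; split=> //; apply: hpq.
have hQqR : seteq (fun x => Q x /\ R x) (fun x => q x /\ R x).
  move=> x; split=> [[hx hRx]|[/hQq [hx _] hRx]] //.
  by split=> //; apply/hQq; split=> //; apply: R_S.
have [P [hP hPQ hPp]] := hgd _ _ hpR hqR hpqR Q hQ hQqR.
have [t [ht hQt]] := hJ Q hQ.
have hpt : ~ p t by move/hpq/hQq => [].
have hPI := prime_ideal_ideal hP.
exists P; split=> // x; split=> [[hPx hSx]|hpx].
  have hxt : J (x * t) by move=> i; apply: (idealMl (ideal_m i) hSx (ht i)).
  have [hpxt _] := (hPp (x * t)).1 (conj (idealMr hPI hPx (hST _ (J_S ht))) (J_R hxt)).
  by case: (prime_idealM hp hSx (J_S ht) hpxt) => // /hpt.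
have hSx := ideal_sub (prime_ideal_ideal hp) hpx.
have hxt : J (x * t) by move=> i; apply: (idealMl (ideal_m i) hSx (ht i)).
have [hPxt _] := (hPp (x * t)).2 (conj (idealMr (prime_ideal_ideal hp) hpx (J_S ht)) (J_R hxt)).
by split=> //; case: (prime_idealM hP (hST _ hSx) (hST _ (J_S ht)) hPxt) => // /hPQ /hQt.
Qed.

Lemma is_localization_R_of_unit T t : globally_perinormal S -> overring R T ->
  going_down R T -> J t -> t != 0 -> T t^-1 -> is_localization R T.
Proof.
move=> hgS [hT hRT hTf] hgd ht t0 ht'.
have hST := S_sub_overring hT hRT ht t0 ht'.
have hgdS : going_down S T.
  apply: going_down_S_of_R => // Q hQ; exists t; split=> //.
  exact: (ideal_proper_unit (prime_ideal_ideal hQ) (prime_ideal_proper hQ) t0 ht').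
have hTfS : subset_ T (Defs.frac S) by move=> x /hTf; apply: frac_subset R_S.
have [M [hM hTM]] := hgS T (And3 hT hST hTfS) hgdS.
apply: (is_localization_of_units subring_R hT hRT) => x /hTM [s [u [hs hu ->]]].
have u0 := mult_set_neq0 hM hu.
exists (s * t), (u * t); split.
- by apply: J_R => i; apply: (idealMl (ideal_m i) hs (ht i)).
- by apply: J_R => i; apply: (idealMl (ideal_m i) (mult_set_sub hM hu) (ht i)).
- exact: mulf_neq0.
- by rewrite invfM; apply: (subringM hT _ ht'); apply/hTM; apply: (localization_inv hS hu).
- by field; rewrite u0 t0.
Qed.

Lemma ideal_span_J_proper T : globally_perinormal S -> overring R T -> going_down R T ->
  (forall t, J t -> t != 0 -> ~ T t^-1) -> ~ ideal_span T J 1.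
Proof.
move=> hgS [hT hRT hTf] hgd hnu [l [hl e1]].
have hST : subset_ S T.
  move=> s hs; rewrite -[s]mulr1 e1 mulr_sumr big_seq.
  apply: (subring_sum hT) => p /hl [hj hz]; rewrite mulrA; apply: (subringM hT _ hz).
  by apply/hRT/J_R => i; apply: (idealMl (ideal_m i) hs (hj i)).
have hgdS : going_down S T.
  apply: going_down_S_of_R => // Q hQ; apply: NNPP => hno; have hQI := prime_ideal_ideal hQ.
  apply: (prime_ideal_proper hQ); rewrite e1 big_seq.
  apply: (ideal_sum hQI) => p /hl [hj hz]; apply: (idealMr hQI _ hz).
  by apply: NNPP => hQj; apply: hno; exists p.1.
have hTfS : subset_ T (Defs.frac S) by move=> x /hTf; apply: frac_subset R_S.
have [M [hM hTM]] := hgS T (And3 hT hST hTfS) hgdS.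
(* A common denominator u of the coefficients of 1 = sum j_p z_p lies in J. *)
have [u hu hul] : exists2 u, M u & forall z, z \in [seq p.2 | p <- l] -> S (u * z).
  by apply: (localization_common_denominator hS hM) => _ /mapP [p /hl [_ /hTM hz] ->].
apply: (hnu u _ (mult_set_neq0 hM hu)); last by apply/hTM; apply: (localization_inv hS hu).
have -> : u = \sum_(p <- l) p.1 * (u * p.2).
  by rewrite -[LHS]mulr1 e1 mulr_sumr; apply: eq_bigr => p _; rewrite mulrCA.
rewrite big_seq; apply: (ideal_sum ideal_J) => p hp; apply: (idealMr ideal_J (hl p hp).1).
by apply: hul; apply/mapP; exists p.
Qed.

Lemma globally_perinormal_R : globally_perinormal S -> globally_perinormal R.
Proof.
move=> hgS T hTo hgd; have [hT hRT hTf] := hTo.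
case: (classic (exists t, [/\ J t, t != 0 & T t^-1])) => [[t [ht t0 ht']]|hno].
  exact: (is_localization_R_of_unit hgS hTo hgd ht t0 ht').
have hnu t : J t -> t != 0 -> ~ T t^-1 by move=> ht t0 ht'; apply: hno; exists t.
have hJT : subset_ J T by move=> x /J_R /hRT.
have [N [hNmax hspanN]] := exists_maximal_ideal hT (ideal_ideal_span hT hJT)
  (ideal_span_J_proper hgS hTo hgd hnu).
have hN := maximal_prime_ideal hT hNmax.
have hM := mult_set_prime_compl hT hN.
have hTN := subring_localization hT hM.
have hTTN : subset_ T (loc_at_prime T N) by move=> x; apply: (localization_sub hM).
have hTNo : overring R (loc_at_prime T N).
  split=> // [x /hRT /hTTN //|x /(localization_frac hM)].
  exact: (frac_frac subring_R hTf).
have hNl := prime_loc_ideal hT hM hN (fun s (hs : T s /\ ~ N s) => hs.2).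
have hJN : subset_ J (loc_ideal (fun y => T y /\ ~ N y) N).
  by move=> x hx; apply: (loc_ideal_sub hM); apply: hspanN; apply: (ideal_span_mem hT hx).
have hgdN := going_down_loc_at_prime subring_R hT hRT hgd hN.
have hTNR := overring_sub_R hTNo hgdN hNl (@loc_at_prime_inv _ T N) hJN.
exact: (is_localization_refl subring_R hT hRT (fun x hx => hTNR _ (hTTN _ hx))).
Qed.

End Pullback.

Theorem theorem5p2 (K : fieldType) (S : K -> Prop) (n : nat)
  (m : 'I_n -> K -> Prop) (k : fieldType) (a : 'I_n -> k -> K) :
  subring S ->
  generalized_Krull S ->
  (2 <= n)%N ->
  (forall i, maximal_ideal S (m i)) ->
  (forall i j, seteq (m i) (m j) -> i = j) ->
  (forall P, maximal_ideal S P -> exists i, seteq P (m i)) ->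
  (forall j, height_ge2 S (m j)) ->
  (forall i, residue_iso S (m i) (a i)) ->
  let R := pullback_ring S m a in
  [/\ local_ring R,
      perinormal R,
      (globally_perinormal S -> globally_perinormal R),
      seteq (integral_closure R) S
    & ~ integrally_closed R].
Proof.
move=> hS hK hn hm hdist hall hht hres R.
by split; [apply: local_R|apply: perinormal_R|apply: globally_perinormal_R
          |apply: integral_closure_R|apply: not_integrally_closed_R].
Qed.
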